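(* Let $k$ be a field of characteristic $0$ and let $\mathcal L$ be a Lie torus of type $(\Delta,\Lambda)$ over $k$. Suppose $\alpha\in\Delta^\times$, $0\neq x\in\mathcal L_\alpha$, $0\neq y\in\mathcal L_{-\alpha}$ and $[x,y]\in\mathcal L_0^0$. Then there is $\lambda\in\Lambda$ with $x\in\mathcal L_\alpha^\lambda$ and $y\in\mathcal L_{-\alpha}^{-\lambda}$.
   Context: An irreducible finite root system in a finite-dimensional $k$-vector space $\mathcal X$ is a finite subset $\Delta\subset\mathcal X$ with $0\in\Delta$ such that $\Delta^\times:=\Delta\setminus\{0\}$ is an irreducible (possibly non-reduced) finite root system in the usual sense. Write $Q=\mathrm{span}_{\mathbb Z}(\Delta)$, $\alpha^\vee$ for the coroot of $\alpha\in\Delta^\times$, $\langle\beta,\alpha^\vee\rangle$ for the natural pairing, and $\Delta^\times_{\mathrm{ind}}=\Delta^\times\setminus 2\Delta^\times$. Let $\Lambda$ be a finitely generated free abelian group. A Lie torus of type $(\Delta,\Lambda)$ is a Lie algebra $\mathcal L$ over $k$ with a $Q\times\Lambda$-grading $\mathcal L=\bigoplus_{(\alpha,\lambda)\in Q\times\Lambda}\mathcal L_\alpha^\lambda$ (with $\mathcal L_\alpha:=\bigoplus_\lambda\mathcal L_\alpha^\lambda$, $\mathcal L^\lambda:=\bigoplus_\alpha\mathcal L_\alpha^\lambda$) such that: (LT1) $\{\alpha\in Q:\mathcal L_\alpha\neq0\}=\Delta$; (LT2)(i) $\mathcal L_\alpha^0\neq0$ for all $\alpha\in\Delta^\times_{\mathrm{ind}}$;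 (ii) whenever $\alpha\in\Delta^\times$ and $\mathcal L_\alpha^\lambda\neq0$ there exist $e\in\mathcal L_\alpha^\lambda$, $f\in\mathcal L_{-\alpha}^{-\lambda}$ with $\mathcal L_\alpha^\lambda=ke$, $\mathcal L_{-\alpha}^{-\lambda}=kf$ and $[[e,f],x]=\langle\beta,\alpha^\vee\rangle x$ for all $x\in\mathcal L_\beta$, $\beta\in Q$; (LT3) $\mathcal L$ is generated as an algebra by the $\mathcal L_\alpha$, $\alpha\in\Delta^\times$; (LT4) $\Lambda$ is generated by $\{\lambda:\mathcal L^\lambda\neq0\}$. *)

From HB Require Import structures.
From mathcomp Require Import all_boot all_order all_algebra.
Set Implicit Arguments. Unset Strict Implicit. Unset Printing Implicit Defensive.
Import Order.TTheory GRing.Theory Num.Theory.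
Local Open Scope ring_scope.

(* The ambient finite-dimensional space X is modelled as 'rV[k]_d;
   a finite subset Delta of X (containing 0) is a seq D.
   The coroot of alpha is the linear form  beta |-> (beta *m cor alpha) 0 0. *)

Definition pairing (k : fieldType) (d : nat) (cor : 'rV[k]_d -> 'cV[k]_d)
  (beta alpha : 'rV[k]_d) : k := (beta *m cor alpha) ord0 ord0.

Definition in_Dx (k : fieldType) (d : nat) (D : seq 'rV[k]_d) (a : 'rV[k]_d) : Prop :=
  a \in D /\ a != 0.

Definition in_Dx_ind (k : fieldType) (d : nat) (D : seq 'rV[k]_d) (a : 'rV[k]_d) : Prop :=
  in_Dx D a /\ ~ (exists b, in_Dx D b /\ a = 2%:R *: b).

(* Delta^x is a (possibly non-reduced) finite root system in X, with coroots
   given by cor (Bourbaki's axioms; the coroot is then unique). *)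
Definition is_root_system (k : fieldType) (d : nat) (D : seq 'rV[k]_d)
  (cor : 'rV[k]_d -> 'cV[k]_d) : Prop :=
  [/\ (span (filter (fun a : 'rV[k]_d => a != 0) D) = fullv),
      (forall a, in_Dx D a -> pairing cor a a = 2%:R),
      (forall a b, in_Dx D a -> in_Dx D b -> in_Dx D (b - pairing cor b a *: a)) &
      (forall a b, in_Dx D a -> in_Dx D b -> exists z : int, pairing cor b a = z%:~R)].

Definition is_irreducible_rs (k : fieldType) (d : nat) (D : seq 'rV[k]_d)
  (cor : 'rV[k]_d -> 'cV[k]_d) : Prop :=
  forall P : 'rV[k]_d -> Prop,
    (exists a, in_Dx D a /\ P a) -> (exists b, in_Dx D b /\ ~ P b) ->
    exists a b, [/\ in_Dx D a, P a, in_Dx D b, ~ P b & pairing cor b a != 0].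

Definition is_irr_finite_root_system (k : fieldType) (d : nat) (D : seq 'rV[k]_d)
  (cor : 'rV[k]_d -> 'cV[k]_d) : Prop :=
  [/\ (0 : 'rV[k]_d) \in D, is_root_system D cor & is_irreducible_rs D cor].

Definition inQ (k : fieldType) (d : nat) (D : seq 'rV[k]_d) (a : 'rV[k]_d) : Prop :=
  exists c : 'rV[k]_d -> int, a = \sum_(b <- D) b *~ c b.

Definition is_lie_bracket (k : fieldType) (L : lmodType k) (br : L -> L -> L) : Prop :=
  [/\ (forall (c : k) x y z, br (c *: x + y) z = c *: br x z + br y z),
      (forall (c : k) x y z, br z (c *: x + y) = c *: br z x + br z y),
      (forall x, br x x = 0) &
      (forall x y z, br x (br y z) + br y (br z x) + br z (br x y) = 0)].

Definition is_subspace (k : fieldType) (L : lmodType k) (P : L -> Prop) : Prop :=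
  [/\ P 0, (forall x y, P x -> P y -> P (x + y)) & (forall (c : k) x, P x -> P (c *: x))].

(* The grading: Lg a l is the homogeneous subspace L_a^l (a in X, l in Lambda =
   Z^n); components with a outside Q are required to be zero, so this is a
   Q x Lambda grading. *)
Definition is_QL_grading (k : fieldType) (d n : nat) (D : seq 'rV[k]_d)
  (L : lmodType k) (br : L -> L -> L)
  (Lg : 'rV[k]_d -> 'rV[int]_n -> L -> Prop) : Prop :=
  [/\ (forall a l, is_subspace (Lg a l)),
      (forall a l x, Lg a l x -> x != 0 -> inQ D a),
      (forall x : L, exists (s : seq ('rV[k]_d * 'rV[int]_n)) (f : 'rV[k]_d * 'rV[int]_n -> L),
           (forall i, Lg i.1 i.2 (f i)) /\ x = \sum_(i <- s) f i),
      (forall (s : seq ('rV[k]_d * 'rV[int]_n)) (f : 'rV[k]_d * 'rV[int]_n -> L),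
           uniq s -> (forall i, Lg i.1 i.2 (f i)) -> \sum_(i <- s) f i = 0 ->
           forall i, i \in s -> f i = 0) &
      (forall a b l m x y, Lg a l x -> Lg b m y -> Lg (a + b) (l + m) (br x y))].

Definition Lroot (k : fieldType) (d n : nat) (L : lmodType k)
  (Lg : 'rV[k]_d -> 'rV[int]_n -> L -> Prop) (a : 'rV[k]_d) (x : L) : Prop :=
  exists (s : seq 'rV[int]_n) (f : 'rV[int]_n -> L),
    (forall l, Lg a l (f l)) /\ x = \sum_(l <- s) f l.

Definition Ldeg (k : fieldType) (d n : nat) (L : lmodType k)
  (Lg : 'rV[k]_d -> 'rV[int]_n -> L -> Prop) (l : 'rV[int]_n) (x : L) : Prop :=
  exists (s : seq 'rV[k]_d) (f : 'rV[k]_d -> L),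
    (forall a, Lg a l (f a)) /\ x = \sum_(a <- s) f a.

Definition is_lie_torus (k : fieldType) (d n : nat) (D : seq 'rV[k]_d)
  (cor : 'rV[k]_d -> 'cV[k]_d) (L : lmodType k) (br : L -> L -> L)
  (Lg : 'rV[k]_d -> 'rV[int]_n -> L -> Prop) : Prop :=
  is_QL_grading D br Lg /\
  [/\
      (forall a, inQ D a -> ((exists x, Lroot Lg a x /\ x != 0) <-> a \in D)),
      (forall a, in_Dx_ind D a -> exists x, Lg a 0 x /\ x != 0),
      (forall a l, in_Dx D a -> (exists x, Lg a l x /\ x != 0) ->
         exists e f, [/\ Lg a l e, Lg (- a) (- l) f,
            (forall z, Lg a l z <-> exists c : k, z = c *: e),
            (forall z, Lg (- a) (- l) z <-> exists c : k, z = c *: f) &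
            (forall b z, inQ D b -> Lroot Lg b z -> br (br e f) z = pairing cor b a *: z)]),
      (forall P : L -> Prop, is_subspace P -> (forall x y, P x -> P y -> P (br x y)) ->
         (forall a x, in_Dx D a -> Lroot Lg a x -> P x) -> forall x, P x) &
      (forall m : 'rV[int]_n, exists (s : seq 'rV[int]_n) (c : 'rV[int]_n -> int),
         (forall l, l \in s -> exists x, Ldeg Lg l x /\ x != 0) /\
         m = \sum_(l <- s) l *~ c l)].

(* Decompose x = sum_l x_l and y = sum_m y_m into their Lambda-homogeneous
   components, with supports S and T.  An sl2 argument shows [x_l, y_m] <> 0
   for all nonzero x_l in L_alpha^l and y_m in L_-alpha^m: if e spans
   L_alpha^l and [e, y_m] = 0, the vectors (ad f)^j y_m would span an infinite
   alpha-string of root spaces.  Fix an additive f : Lambda -> Z injective on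
   S and T.  If l1 and m1 are f-maximal in S and T, then (l1, m1) is the only
   pair with sum l1 + m1, so the L^(l1+m1)-component of [x, y] is
   [x_l1, y_m1] <> 0; as [x, y] lies in L_0^0, this forces l1 + m1 = 0.  The
   same holds for the f-minimal pair, and together the two equalities squeeze
   S and T to single points. *)

From HB Require Import structures.
From mathcomp Require Import all_boot all_order all_algebra.
From mathcomp Require Import zify.
Set Implicit Arguments. Unset Strict Implicit. Unset Printing Implicit Defensive.
Import Order.TTheory GRing.Theory Num.Theory.
Local Open Scope ring_scope.

Lemma sum_pred1_uniq (V : nmodType) (I : eqType) (r : seq I) (j : I) (F : I -> V) :
  uniq r -> j \in r -> \sum_(i <- r | j == i) F i = F j.
Proof.
move=> ur jr; rewrite -big_filter (eq_filter (a2 := pred1 j)) => [|i].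
  by rewrite filter_pred1_uniq // big_seq1.
by rewrite /= eq_sym.
Qed.

Lemma sum_partition_seq (V : nmodType) (I J : eqType) (s : seq I) (U : seq J)
    (h : I -> J) (F : I -> V) :
  uniq U -> {subset map h s <= U} ->
  \sum_(j <- U) \sum_(i <- s | h i == j) F i = \sum_(i <- s) F i.
Proof.
move=> uU sU; under eq_bigr do rewrite big_mkcond.
rewrite exchange_big /=; apply: eq_big_seq => i si.
by rewrite -big_mkcond sum_pred1_uniq // sU ?map_f.
Qed.

Lemma seq_argmax (T : eqType) (f : T -> int) (s : seq T) x0 :
  x0 \in s -> exists2 z, z \in s & forall y, y \in s -> f y <= f z.
Proof.
elim: s x0 => [//|b s IH] x0 _; case: s IH => [|c s] IH.
  by exists b; rewrite ?mem_head // => y; rewrite mem_seq1 => /eqP ->.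
have [z zs Hz] := IH c (mem_head _ _).
have [fbz|fzb] := lerP (f b) (f z).
  by exists z => [|y]; rewrite in_cons ?zs ?orbT // => /orP[/eqP->|/Hz].
exists b => [|y]; rewrite ?mem_head // in_cons => /orP[/eqP->//|/Hz fyz].
exact: le_trans fyz (ltW fzb).
Qed.

Lemma sum_neq0_mem (V : nmodType) (I : eqType) (r : seq I) (F : I -> V) :
  \sum_(i <- r) F i != 0 -> exists i, i \in r.
Proof. by case: r => [|i r]; rewrite ?big_nil ?eqxx // => _; exists i; rewrite mem_head. Qed.

Lemma uniq_all_eq1 (T : eqType) (s : seq T) (z : T) :
  uniq s -> z \in s -> (forall y, y \in s -> y = z) -> s = [:: z].
Proof.
case: s => [//|a [|b s]] /=; first by move=> _ _ H; rewrite (H a) ?mem_head.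
case/andP=> /negP nab _ _ H; case: nab.
by rewrite (H a (mem_head _ _)) (H b) ?mem_head // in_cons mem_head orbT.
Qed.

Definition isolated_sum (V : zmodType) (S T : seq V) (l1 m1 : V) :=
  forall l m, l \in S -> m \in T -> l + m = l1 + m1 -> l = l1 /\ m = m1.

Lemma argmax_sum_isolated (V : zmodType) (f : V -> int) (S T : seq V) l1 m1 :
  {morph f : u v / u + v} -> {in S &, injective f} ->
  l1 \in S -> (forall l, l \in S -> f l <= f l1) -> (forall m, m \in T -> f m <= f m1) ->
  isolated_sum S T l1 m1.
Proof.
move=> fD f_injS l1S maxl1 maxm1 l m lS mT lm.
have fl : f l = f l1.
  by have := congr1 f lm; rewrite !fD; have := maxl1 l lS; have := maxm1 m mT; lia.
have el : l = l1 by apply: f_injS.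
by split=> //; move: lm; rewrite el => /addrI.
Qed.

Lemma isolated_sums_eq0_singleton (V : zmodType) (f : V -> int) (S T : seq V) l0 m0 :
  {morph f : u v / u + v} -> {in S &, injective f} -> {in T &, injective f} ->
  uniq S -> uniq T -> l0 \in S -> m0 \in T ->
  (forall l m, l \in S -> m \in T -> isolated_sum S T l m -> l + m = 0) ->
  exists l, S = [:: l] /\ T = [:: - l].
Proof.
move=> fD f_injS f_injT uS uT l0S m0T iso0.
have f0 : f 0 = 0 by have := fD 0 0; rewrite addr0; lia.
have fN : {morph (fun v => - f v) : u v / u + v} by move=> u v; rewrite fD opprD.
have fNinjS : {in S &, injective (fun v => - f v)} by move=> ? ? ? ? /oppr_inj/f_injS->.
have fNinjT : {in T &, injective (fun v => - f v)} by move=> ? ? ? ? /oppr_inj/f_injT->.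
have [lmax lmaxS maxS] := seq_argmax f l0S.
have [mmax mmaxT maxT] := seq_argmax f m0T.
have [lmin lminS minS] := seq_argmax (fun v => - f v) l0S.
have [mmin mminT minT] := seq_argmax (fun v => - f v) m0T.
have emax := iso0 _ _ lmaxS mmaxT (argmax_sum_isolated fD f_injS lmaxS maxS maxT).
have emin := iso0 _ _ lminS mminT (argmax_sum_isolated fN fNinjS lminS minS minT).
have fmax : f lmax + f mmax = 0 by rewrite -fD emax f0.
have fmin : f lmin + f mmin = 0 by rewrite -fD emin f0.
exists lmax; split.
  apply: uniq_all_eq1 => // l lS; apply: f_injS => //.
  by have := maxS l lS; have := minS l lS; have := minT mmax mmaxT; lia.
have -> : - lmax = mmax by apply/eqP; rewrite eq_sym -addr_eq0 addrC emax.
apply: uniq_all_eq1 => // m mT; apply: f_injT => //.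
by have := maxT m mT; have := minT m mT; have := minS lmax lmaxS; lia.
Qed.

Lemma poly_int_nonroot (p : {poly int}) : p != 0 -> exists t : int, ~~ root p t.
Proof.
move=> pn0; pose ts := [seq i%:Z | i <- iota 0 (size p)].
have /hasP[t _ ?] : has (fun t => ~~ root p t) ts; last by exists t.
apply/hasPn => /= allroot; have /max_poly_roots : all (root p) ts.
  by apply/allP => t /allroot /negPn.
rewrite size_map size_iota ltnn map_inj_uniq ?iota_uniq //.
- by move=> /(_ pn0 isT).
- by move=> i j [].
Qed.

Lemma exists_horner_injective (ps : seq {poly int}) :
  exists t : int, {in ps &, injective (horner^~ t)}.
Proof.
pose P := \prod_(p <- undup ps) \prod_(q <- undup ps | p != q) (p - q).
have /poly_int_nonroot[t Pt] : P != 0.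
  rewrite prodf_seq_neq0; apply/allP => p _ /=.
  by rewrite prodf_seq_neq0; apply/allP => q _; apply/implyP; rewrite subr_eq0.
exists t; move=> p q pps qps /eqP; apply: contraTeq => pq; move: Pt.
rewrite /root horner_prod prodf_seq_eq0 => /hasPn/(_ p).
rewrite mem_undup horner_prod prodf_seq_eq0 => /(_ pps)/hasPn/(_ q).
by rewrite mem_undup pq hornerD hornerN subr_eq0 => /(_ qps).
Qed.

Definition rV_poly n (v : 'rV[int]_n) : {poly int} := \sum_(i < n) v ord0 i *: 'X^i.

Lemma rV_polyD n : {morph @rV_poly n : u v / u + v}.
Proof.
by move=> u v; rewrite -big_split; apply: eq_bigr => i _; rewrite mxE scalerDl.
Qed.

Lemma coef_rV_poly n (v : 'rV[int]_n) (i : 'I_n) : (rV_poly v)`_i = v ord0 i.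
Proof.
rewrite coef_sum (bigD1 i) //= coefZ coefXn eqxx mulr1 big1 ?addr0 // => j ji.
by rewrite coefZ coefXn (inj_eq val_inj) eq_sym (negbTE ji) mulr0.
Qed.

Lemma rV_poly_inj n : injective (@rV_poly n).
Proof. by move=> u v uv; apply/rowP => i; rewrite -!coef_rV_poly uv. Qed.

Lemma exists_additive_injective n (F : seq 'rV[int]_n) :
  exists f : 'rV[int]_n -> int, {morph f : u v / u + v} /\ {in F &, injective f}.
Proof.
have [t inj_t] := exists_horner_injective (map (@rV_poly n) F).
exists (fun v => (rV_poly v).[t]); split=> [u v|u v uF vF /inj_t uv].
  by rewrite rV_polyD hornerD.
by apply: rV_poly_inj; apply: uv; apply: map_f.
Qed.

Lemma subspace_sum (k : fieldType) (L : lmodType k) (P : L -> Prop) (I : Type)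
    (r : seq I) (Q : pred I) (F : I -> L) :
  is_subspace P -> (forall i, Q i -> P (F i)) -> P (\sum_(i <- r | Q i) F i).
Proof.
case=> P0 PD _ PF; elim: r => [|i r IH]; first by rewrite big_nil.
by rewrite big_cons; case: ifP => // /PF Pi; apply: PD.
Qed.

Lemma mulrn_char0_inj (k : fieldType) (V : lmodType k) (a : V) :
  [pchar k] =i pred0 -> a != 0 -> injective (fun i => a *+ i).
Proof.
move=> chk0 an0 i j; wlog lij : i j / (i <= j)%N => [hw|].
  by case/orP: (leq_total i j) => /hw // h /esym /h.
rewrite /= -(subnKC lij) mulrnDr -{1}[a *+ i]addr0 => /addrI/esym/eqP.
rewrite -scaler_nat scaler_eq0 (negbTE an0) orbF (pcharf0P _).1 // subn_eq0.
by move=> lji; lia.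
Qed.

Lemma exists_opp_mulrn_notin (k : fieldType) (V : lmodType k) (s : seq V) (a : V) :
  [pchar k] =i pred0 -> a != 0 -> exists j, - (a *+ j.+1) \notin s.
Proof.
move=> chk0 an0; pose js := iota 0 (size s).+1.
have /hasP[j _ ?] : has (fun j => - (a *+ j.+1) \notin s) js; last by exists j.
apply/hasPn => /= ins; pose g j := - (a *+ j.+1).
have : (size (map g js) <= size s)%N.
  apply: uniq_leq_size => [|_ /mapP[j /ins /negPn ? ->] //].
  by rewrite map_inj_uniq ?iota_uniq // => i j /oppr_inj/mulrn_char0_inj-/(_ chk0 an0) [].
by rewrite size_map size_iota ltnn.
Qed.

Section LieBracket.

Variables (k : fieldType) (L : lmodType k) (br : L -> L -> L).
Hypothesis Hbr : is_lie_bracket br.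

Lemma br0l z : br 0 z = 0.
Proof.
case: Hbr => linl _ _ _; have := linl 1 0 0 z; rewrite !scale1r addr0.
by move=> h; apply: (addrI (br 0 z)); rewrite addr0 -h.
Qed.

Lemma br0r z : br z 0 = 0.
Proof.
case: Hbr => _ linr _ _; have := linr 1 0 0 z; rewrite !scale1r addr0.
by move=> h; apply: (addrI (br z 0)); rewrite addr0 -h.
Qed.

Lemma brZl c x z : br (c *: x) z = c *: br x z.
Proof. by case: Hbr => linl _ _ _; rewrite -[c *: x]addr0 linl br0l addr0. Qed.

Lemma brZr c x z : br z (c *: x) = c *: br z x.
Proof. by case: Hbr => _ linr _ _; rewrite -[c *: x]addr0 linr br0r addr0. Qed.

Lemma brDl x y z : br (x + y) z = br x z + br y z.
Proof. by case: Hbr => linl _ _ _; have := linl 1 x y z; rewrite !scale1r. Qed.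

Lemma brDr x y z : br z (x + y) = br z x + br z y.
Proof. by case: Hbr => _ linr _ _; have := linr 1 x y z; rewrite !scale1r. Qed.

Lemma brNr x z : br z (- x) = - br z x.
Proof. by rewrite -scaleN1r brZr scaleN1r. Qed.

Lemma br_suml (I : Type) (r : seq I) (P : pred I) (F : I -> L) z :
  br (\sum_(i <- r | P i) F i) z = \sum_(i <- r | P i) br (F i) z.
Proof. exact: (big_morph (br^~ z) (fun x y => brDl x y z) (br0l z)). Qed.

Lemma br_sumr (I : Type) (r : seq I) (P : pred I) (F : I -> L) z :
  br z (\sum_(i <- r | P i) F i) = \sum_(i <- r | P i) br z (F i).
Proof. exact: (big_morph (br z) (fun x y => brDr x y z) (br0r z)). Qed.

Lemma br_anticomm x y : br x y = - br y x.
Proof.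
case: Hbr => _ _ brxx _; apply/eqP; rewrite -addr_eq0.
by have := brxx (x + y); rewrite brDl !brDr !brxx add0r addr0 => ->.
Qed.

Lemma br_leibniz e f w : br e (br f w) = br (br e f) w + br f (br e w).
Proof.
case: Hbr => _ _ _ jacobi; have := jacobi e f w.
rewrite (br_anticomm w (br e f)) (br_anticomm w e) brNr.
by move/eqP; rewrite -addrA -opprD subr_eq0 addrC => /eqP.
Qed.

Section Sl2String.

Hypothesis chk0 : [pchar k] =i pred0.
Variables e f v : L.
Hypothesis Hev : br e v = 0.
(* [e, f] acts on L_(-(j+1) alpha) by <-(j+1) alpha, alpha^v> = -2(j+1). *)
Hypothesis Hh : forall j, br (br e f) (iter j (br f) v) = - (2 * j.+1)%:R *: iter j (br f) v.

Lemma sl2_raise j : br e (iter j (br f) v) = - (j * j.+1)%:R *: iter j.-1 (br f) v.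
Proof.
elim: j => [|j IH]; first by rewrite Hev mul0n oppr0 scale0r.
rewrite iterS br_leibniz Hh IH brZr.
case: j IH => [|j] _; first by rewrite mul0n oppr0 scale0r addr0.
rewrite -iterS -scalerDl -opprD -natrD; congr (- _%:R *: _); lia.
Qed.

Lemma sl2_string_eq0 N : iter N (br f) v = 0 -> v = 0.
Proof.
elim: N => [//|N IH] wN; apply: IH; move: (sl2_raise N.+1).
rewrite wN br0r => /esym/eqP; rewrite scaler_eq0 oppr_eq0 (pcharf0P _).1 //.
by move/eqP.
Qed.

End Sl2String.

End LieBracket.

Section Grading.

Variables (k : fieldType) (d n : nat) (D : seq 'rV[k]_d) (L : lmodType k).
Variables (br : L -> L -> L) (Lg : 'rV[k]_d -> 'rV[int]_n -> L -> Prop).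
Hypothesis Hgr : is_QL_grading D br Lg.

Let Lg_subspace a l : is_subspace (Lg a l).
Proof. by case: Hgr. Qed.

Lemma Lroot_of_Lg a l z : Lg a l z -> Lroot Lg a z.
Proof.
move=> Hz; exists [:: l], (fun l' => if l' == l then z else 0); split.
  by move=> l'; case: eqP => [->|_] //; case: (Lg_subspace a l').
by rewrite big_seq1 eqxx.
Qed.

Lemma Lroot_decomp a x : Lroot Lg a x ->
  exists (S : seq 'rV[int]_n) (X : 'rV[int]_n -> L),
    [/\ uniq S, forall l, Lg a l (X l), {in S, forall l, X l != 0} & x = \sum_(l <- S) X l].
Proof.
move=> [s [f [Hf ->]]]; pose X l := \sum_(i <- s | i == l) f i.
exists [seq l <- undup s | X l != 0], X; split.
- by rewrite filter_uniq ?undup_uniq.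
- by move=> l; apply: subspace_sum => // i /eqP <-.
- by move=> l; rewrite mem_filter => /andP[].
rewrite big_filter -(sum_partition_seq (h := id) f (undup_uniq s)).
  by rewrite [RHS]big_mkcond; apply: eq_bigr => l _; case: ifPn => // /negPn/eqP.
by move=> i; rewrite map_id mem_undup.
Qed.

Lemma homogeneous_component_eq0 c mu (U : seq 'rV[int]_n) (g : 'rV[int]_n -> L) z :
  uniq U -> (forall nu, Lg c nu (g nu)) -> Lg c mu z -> \sum_(nu <- U) g nu = z ->
  forall nu, nu \in U -> nu != mu -> g nu = 0.
Proof.
move=> uU Hg Hz sumU nu nuU numu; case: Hgr => _ _ _ Hdirect _.
pose W := undup (mu :: U).
pose part nu' := \sum_(j <- U | j == nu') g j - (if mu == nu' then z else 0).
pose fam (i : 'rV[k]_d * 'rV[int]_n) := if i.1 == c then part i.2 else 0.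
have Hfam i : Lg i.1 i.2 (fam i).
  rewrite /fam; case: eqP => [->|_]; last by case: (Lg_subspace i.1 i.2).
  have [_ LgD LgZ] := Lg_subspace c i.2; apply: LgD.
    by apply: subspace_sum => // j /eqP <-.
  by rewrite -scaleN1r; apply: LgZ; case: eqP => [<-|_] //; case: (Lg_subspace c i.2).
have famW : \sum_(i <- map (pair c) W) fam i = 0.
  rewrite big_map /fam /= eqxx sumrB -big_mkcond sum_pred1_uniq ?undup_uniq //.
    rewrite sum_partition_seq ?undup_uniq ?sumU ?subrr // => j.
    by rewrite map_id mem_undup in_cons orbC => ->.
  by rewrite mem_undup mem_head.
have uW : uniq (map (pair c) W) by rewrite map_inj_uniq ?undup_uniq // => ? ? [].
have := Hdirect _ fam uW Hfam famW (c, nu).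
rewrite map_f ?mem_undup ?in_cons ?nuU ?orbT // => /(_ isT).
rewrite /fam /part /= eqxx eq_sym (negbTE numu) subr0 -big_filter.
by rewrite filter_pred1_uniq // big_seq1.
Qed.

Hypothesis Hbr : is_lie_bracket br.

Lemma br_sum_component_eq0 a b mu nu (S T : seq 'rV[int]_n) (X Y : 'rV[int]_n -> L) :
  (forall l, Lg a l (X l)) -> (forall m, Lg b m (Y m)) ->
  Lg (a + b) mu (br (\sum_(l <- S) X l) (\sum_(m <- T) Y m)) -> nu != mu ->
  \sum_(p <- [seq (l, m) | l <- S, m <- T] | p.1 + p.2 == nu) br (X p.1) (Y p.2) = 0.
Proof.
move=> HX HY Hxy numu; case: Hgr => _ _ _ _ Hgrbr.
pose ST := [seq (l, m) | l <- S, m <- T].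
pose U := undup (nu :: [seq p.1 + p.2 | p <- ST]).
pose g nu' := \sum_(p <- ST | p.1 + p.2 == nu') br (X p.1) (Y p.2).
have sum_g : \sum_(nu' <- U) g nu' = br (\sum_(l <- S) X l) (\sum_(m <- T) Y m).
  rewrite sum_partition_seq ?undup_uniq // => [|q qST]; last first.
    by rewrite mem_undup in_cons qST orbT.
  rewrite big_allpairs (br_suml Hbr); apply: eq_bigr => l _.
  by rewrite (br_sumr Hbr).
apply: (homogeneous_component_eq0 (undup_uniq _) _ Hxy sum_g) => //.
- by move=> nu'; apply: subspace_sum => // p /eqP <-; apply: Hgrbr.
- by rewrite mem_undup mem_head.
Qed.

End Grading.

Lemma inQ_opp_mulrn (k : fieldType) d (D : seq 'rV[k]_d) a (m : nat) :
  inQ D a -> inQ D (- (a *+ m)).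
Proof.
case=> c ->; exists (fun b => c b * - (m%:Z)).
rewrite -sumrMnl -sumrN; apply: eq_bigr => b _.
by rewrite mulrzA mulrNz pmulrn.
Qed.

Lemma pairing_opp_mulrn (k : fieldType) d (cor : 'rV[k]_d -> 'cV[k]_d) a b (m : nat) :
  pairing cor (- (b *+ m)) a = - (pairing cor b a *+ m).
Proof. by rewrite /pairing mulNmx -scaler_nat -scalemxAl !mxE mulr_natl. Qed.

Section LieTorus.

Variables (k : fieldType) (d n : nat) (D : seq 'rV[k]_d) (cor : 'rV[k]_d -> 'cV[k]_d).
Variables (L : lmodType k) (br : L -> L -> L) (Lg : 'rV[k]_d -> 'rV[int]_n -> L -> Prop).
Hypotheses (chk0 : [pchar k] =i pred0) (Hbr : is_lie_bracket br).
Hypothesis pairing_root : forall a, in_Dx D a -> pairing cor a a = 2%:R.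
Hypothesis Htorus : is_lie_torus D cor br Lg.

Lemma br_root_spaces_neq0 a l m u v :
  in_Dx D a -> Lg a l u -> u != 0 -> Lg (- a) m v -> v != 0 -> br u v != 0.
Proof.
move=> Ha Hu un0 Hv vn0; have [Hgr [LT1 _ LT2 _ _]] := Htorus.
have [_ HQ _ _ Hgrbr] := Hgr.
have [e [f [_ Hf Le _ Hact]]] := LT2 a l Ha (ex_intro _ u (conj Hu un0)).
have [c uc] := (Le u).1 Hu.
have cn0 : c != 0 by apply: contraNneq un0 => c0; rewrite uc c0 scale0r.
rewrite uc (brZl Hbr) scaler_eq0 negb_or cn0 /=; apply: contra vn0 => /eqP Hev.
have Qa : inQ D a := HQ a l u Hu un0.
pose w j := iter j (br f) v.
have Hw j : Lg (- (a *+ j.+1)) (m + (- l) *+ j) (w j).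
  elim: j => [|j IH]; first by rewrite mulr1n mulr0n addr0.
  rewrite [a *+ _]mulrS [(- l) *+ _]mulrS opprD addrCA; exact: Hgrbr Hf IH.
have Hh j : br (br e f) (w j) = - (2 * j.+1)%:R *: w j.
  rewrite (Hact _ _ (inQ_opp_mulrn j.+1 Qa) (Lroot_of_Lg Hgr (Hw j))).
  by rewrite pairing_opp_mulrn pairing_root // natrM mulr_natr.
have [j notD] := exists_opp_mulrn_notin D chk0 Ha.2.
apply/eqP; apply: (sl2_string_eq0 Hbr chk0 Hev Hh (N := j)); apply/eqP.
apply: contraNT notD => wn0; apply: (LT1 _ (inQ_opp_mulrn j.+1 Qa)).1.
by exists (w j); split; [exact: (Lroot_of_Lg Hgr (Hw j)) | exact: wn0].
Qed.

Lemma isolated_sum_eq0 a (S T : seq 'rV[int]_n) (X Y : 'rV[int]_n -> L) l1 m1 :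
  in_Dx D a -> (forall l, Lg a l (X l)) -> {in S, forall l, X l != 0} ->
  (forall m, Lg (- a) m (Y m)) -> {in T, forall m, Y m != 0} ->
  Lg 0 0 (br (\sum_(l <- S) X l) (\sum_(m <- T) Y m)) -> uniq S -> uniq T ->
  l1 \in S -> m1 \in T -> isolated_sum S T l1 m1 -> l1 + m1 = 0.
Proof.
move=> Ha HX XS HY YT Hxy uS uT l1S m1T iso; apply/eqP/negPn/negP => nu_neq0.
rewrite -(subrr a) in Hxy.
have := br_sum_component_eq0 Htorus.1 Hbr HX HY Hxy nu_neq0.
have uST : uniq [seq (l, m) | l <- S, m <- T].
  by rewrite allpairs_uniq // => -[? ?] [? ?].
rewrite big_seq_cond (eq_bigl (fun p => (l1, m1) == p)) => [|[l m] /=].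
  rewrite sum_pred1_uniq ?allpairs_f //=; apply/eqP.
  exact: br_root_spaces_neq0 Ha (HX l1) (XS l1 l1S) (HY m1) (YT m1 m1T).
apply/idP/idP => [/andP[/allpairsP[[l' m'] /= [lS mT [-> ->]]] /eqP e]|/eqP[<- <-]].
  by have [-> ->] := iso _ _ lS mT e.
by rewrite allpairs_f ?eqxx.
Qed.

End LieTorus.

Theorem lemma3p6 (k : fieldType) (d n : nat) (D : seq 'rV[k]_d)
  (cor : 'rV[k]_d -> 'cV[k]_d) (L : lmodType k) (br : L -> L -> L)
  (Lg : 'rV[k]_d -> 'rV[int]_n -> L -> Prop) :
  [pchar k] =i pred0 ->
  is_irr_finite_root_system D cor ->
  is_lie_bracket br ->
  is_lie_torus D cor br Lg ->
  forall (a : 'rV[k]_d) (x y : L),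
    in_Dx D a ->
    Lroot Lg a x -> x != 0 ->
    Lroot Lg (- a) y -> y != 0 ->
    Lg 0 0 (br x y) ->
    exists l : 'rV[int]_n, Lg a l x /\ Lg (- a) (- l) y.
Proof.
move=> chk0 [_ [_ pairing_root _ _] _] Hbr Htorus a x y Ha Hx xn0 Hy yn0 Hxy.
have [S [X [uS HX XS xE]]] := Lroot_decomp Htorus.1 Hx.
have [T [Y [uT HY YT yE]]] := Lroot_decomp Htorus.1 Hy.
rewrite {}xE in xn0 Hxy *; rewrite {}yE in yn0 Hxy *.
have [l0 l0S] := sum_neq0_mem xn0.
have [m0 m0T] := sum_neq0_mem yn0.
have [f [fD f_inj]] := exists_additive_injective (S ++ T).
have f_injS : {in S &, injective f}.
  by apply: sub_in2 f_inj => u; rewrite mem_cat => ->.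
have f_injT : {in T &, injective f}.
  by apply: sub_in2 f_inj => u; rewrite mem_cat orbC => ->.
have [|l [-> ->]] := isolated_sums_eq0_singleton fD f_injS f_injT uS uT l0S m0T.
  move=> l1 m1; exact: (isolated_sum_eq0 chk0 Hbr pairing_root Htorus Ha HX XS HY YT Hxy uS uT).
by exists l; rewrite !big_seq1.
Qed.
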